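(* Let $g:\mathbb N\to\mathbb N$ be a nondecreasing function with $g(i)\ge i$ for all $i\in\mathbb N$, let $n\ge1$, and let $A=\{a_1^{g(1)},a_2^{g(2)},\ldots,a_n^{g(n)}\}$. For $j\ge1$ put $g^{-1}(j)=\min\{i: g(i)\ge j\}$. Then for every integer $m$ with $1\le m\le n$, $$|C_m(A)|=\sum_{\substack{\lambda_1+2\lambda_2+\cdots+m\lambda_m=m\\ \lambda_i\in\mathbb Z_{\ge0}}}\ \prod_{j=1}^m\binom{n-g^{-1}(j)-\sum_{i=j+1}^m\lambda_i+1}{\lambda_j},$$ the sum running over all non-negative integer solutions of $\lambda_1+2\lambda_2+\cdots+m\lambda_m=m$.
   Context: A multiset $A=\{a_1^{k_1},\ldots,a_n^{k_n}\}$ consists of distinct elements $a_1,\ldots,a_n$ with positive integer multiplicities $k_1,\ldots,k_n$. A submultiset of $A$ is a multiset $\{a_1^{r_1},\ldots,a_n^{r_n}\}$ with integers $0\le r_i\le k_i$, of cardinality $r_1+\cdots+r_n$. $C_m(A)$ denotes the set of all submultisets of $A$ of cardinality $m$. *)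

From mathcomp Require Import all_boot.
Set Implicit Arguments. Unset Strict Implicit. Unset Printing Implicit Defensive.

(* A multiset {a_1^{k_1},...,a_n^{k_n}} is represented by its multiplicity
   function k : 'I_n -> nat (element a_{i+1} <-> ordinal i).  Since every r_i <= \sum r = m, the
   multiplicities of such submultisets lie in 'I_m.+1 (no loss of generality). *)
Definition Cm (n : nat) (k : 'I_n -> nat) (m : nat) : {set {ffun 'I_n -> 'I_m.+1}} :=
  [set r : {ffun 'I_n -> 'I_m.+1} | [forall i, r i <= k i] && (\sum_(i < n) r i == m)].

(* g^{-1}(j) = min { i >= 1 : g i >= j }.  Whenever g j >= j (which holds under the
   hypotheses of the theorem) this minimum lies in [1, j], and this definition
   returns exactly it: the first i in 1,2,...,j with j <= g i. *)
Definition ginv (g : nat -> nat) (j : nat) : nat :=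
  (find (fun i => j <= g i) (iota 1 j)).+1.

From mathcomp Require Import all_boot.
From mathcomp Require Import zify.
Set Implicit Arguments. Unset Strict Implicit. Unset Printing Implicit Defensive.

(* A submultiset r of cardinality m is sorted by its profile: lambda_j is the
   number of elements taken with multiplicity exactly j, so that
   lambda_1 + 2 lambda_2 + ... + m lambda_m = m.  For a fixed profile the
   submultisets are counted by placing the levels from the top down: the
   lambda_j elements of multiplicity j must be chosen among the elements of
   multiplicity >= j in A that are not already used by higher levels.  Since
   these "layers" are nested, this gives one binomial coefficient per level.

   For the multiset
   of the theorem the layer of multiplicity >= j is the final segment
   {g^{-1}(j), ..., n} of size n - g^{-1}(j) + 1 (card_layer_ginv); a weight
   bound (weight_tail_bound) shows that truncated subtraction never bites. *)

Definition level (T : finType) (m : nat) (f : {ffun T -> 'I_m.+1}) (v : nat) :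
  {set T} := [set p | f p == v :> nat].

Lemma indicator_expansion (m x : nat) :
  x < m.+1 -> x = \sum_(j < m) j.+1 * (x == j.+1).
Proof.
case: x => [_|x lt_x_m]; first by rewrite big1 // => j _; rewrite muln0.
rewrite ltnS in lt_x_m.
rewrite (bigD1 (Ordinal lt_x_m)) //= eqxx muln1 big1 ?addn0 // => j ne_j_x.
rewrite eqSS; suff -> : (x == j) = false by rewrite muln0.
by apply/negbTE; apply: contra ne_j_x => /eqP e; apply/eqP/val_inj.
Qed.

Lemma sum_by_levels (T : finType) (m : nat) (f : {ffun T -> 'I_m.+1}) :
  \sum_(p : T) f p = \sum_(j < m) j.+1 * #|level f j.+1|.
Proof.
under eq_bigr => p _ do rewrite (indicator_expansion (ltn_ord (f p))).
rewrite exchange_big; apply: eq_bigr => j _; rewrite -big_distrr /=.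
congr (_ * _); rewrite -sum1_card [RHS]big_mkcond /=.
by apply: eq_bigr => p _; rewrite inE; case: (_ == _).
Qed.

Definition layered (T : finType) (m k : nat) (A : nat -> {set T})
  (lam : nat -> nat) (D : {set T}) : {set {ffun T -> 'I_m.+1}} :=
  [set f : {ffun T -> 'I_m.+1} |
     [forall p, (0 < f p) ==> [&& p \in D, f p <= k & p \in A (f p).-1]]
     && [forall v : 'I_k, #|level f v.+1| == lam v]].

Definition raise (T : finType) (m k : nat) (B : {set T}) (f : {ffun T -> 'I_m.+1}) :
  {ffun T -> 'I_m.+1} := [ffun p => if p \in B then inord k.+1 else f p].

Section Layers.
Variables (T : finType) (m : nat) (A : nat -> {set T}) (lam : nat -> nat).
Hypothesis A_nested : forall j, A j.+1 \subset A j.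

Lemma A_antitone j k : j <= k -> A k \subset A j.
Proof.
elim: k => [|k IH]; first by rewrite leqn0 => /eqP ->.
rewrite leq_eqVlt => /orP [/eqP -> // | ]; rewrite ltnS => /IH.
exact: subset_trans.
Qed.

Lemma layered_support k D f p :
  f \in layered m k A lam D -> 0 < f p -> [&& p \in D, f p <= k & p \in A (f p).-1].
Proof. by rewrite inE => /andP [/forallP /(_ p) /implyP]. Qed.

Lemma layered_levels k D f (v : 'I_k) :
  f \in layered m k A lam D -> #|level f v.+1| = lam v.
Proof. by rewrite inE => /andP [_ /forallP /(_ v) /eqP]. Qed.

Lemma layered_out k D f p : f \in layered m k A lam D -> p \notin D -> f p = ord0.
Proof.
move=> f_lay p_out; apply: val_inj => /=.
case: (posnP (f p)) => // /(layered_support f_lay).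
by rewrite (negbTE p_out).
Qed.

Lemma layered_le k D f p : f \in layered m k A lam D -> f p <= k.
Proof.
move=> f_lay; case: (posnP (f p)) => [-> // | /(layered_support f_lay)].
by case/and3P.
Qed.

Lemma layered0 D : layered m 0 A lam D = [set [ffun => ord0]].
Proof.
apply/setP => f; rewrite in_set1; apply/idP/eqP => [f_lay | ->].
  apply/ffunP => p; rewrite ffunE; apply: val_inj => /=.
  by have := layered_le p f_lay; rewrite leqn0 => /eqP.
rewrite inE; apply/andP; split; apply/forallP; last by case.
by move=> p; rewrite ffunE.
Qed.

Section Step.
Variables (k : nat) (D : {set T}).
Implicit Types (B : {set T}) (f : {ffun T -> 'I_m.+1}).
Hypothesis lt_k_m : k < m.

Lemma level_raise B f :
  f \in layered m k A lam (D :\: B) -> level (raise k B f) k.+1 = B.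
Proof.
move=> f_lay; apply/setP => p; rewrite inE ffunE.
case: ifP => pB; first by rewrite inordK ?eqxx.
by apply/negbTE; rewrite neq_ltn ltnS (layered_le _ f_lay).
Qed.

Lemma raise_layered B f : B \subset A k :&: D -> #|B| = lam k ->
  f \in layered m k A lam (D :\: B) -> raise k B f \in layered m k.+1 A lam D.
Proof.
move=> sBAD cardB f_lay; rewrite inE; apply/andP; split.
  apply/forallP => p; apply/implyP; rewrite ffunE; case: ifP => pB.
    move/subsetP: sBAD => /(_ p pB); rewrite inE inordK // => /andP [-> ->].
    by rewrite leqnn.
  move=> /(layered_support f_lay) /and3P [].
  by rewrite inE => /andP [_ ->] /leqW -> ->.
apply/forallP => v; apply/eqP; case: (ltnP v k) => [lt_vk | le_kv].
  rewrite -(layered_levels (Ordinal lt_vk) f_lay); apply: eq_card => p.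
  rewrite !inE ffunE /=; case: ifP => // pB.
  by rewrite inordK // eqSS (gtn_eqF lt_vk) (layered_out f_lay) // inE pB.
have -> : nat_of_ord v = k by apply/eqP; rewrite eqn_leq le_kv -ltnS ltn_ord.
by rewrite level_raise.
Qed.

Lemma raise_inj B : {in layered m k A lam (D :\: B) &, injective (raise k B)}.
Proof.
move=> f1 f2 lay1 lay2 /ffunP eq12; apply/ffunP => p; have := eq12 p.
rewrite !ffunE; case: ifP => // pB _.
by rewrite (layered_out lay1) ?(layered_out lay2) // inE pB.
Qed.

Lemma layered_raise_eq f : f \in layered m k.+1 A lam D ->
  exists2 f', f' \in layered m k A lam (D :\: level f k.+1)
            & f = raise k (level f k.+1) f'.
Proof.
move=> f_lay; set B := level f k.+1.
exists [ffun p => if p \in B then ord0 else f p].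
  rewrite inE; apply/andP; split.
    apply/forallP => p; apply/implyP; rewrite ffunE; case: ifP => // pB.
    move=> /(layered_support f_lay) /and3P [pD le_fk pA].
    rewrite in_setD pB pD pA andbT /= andbT.
    by move: pB le_fk; rewrite inE leq_eqVlt => -> /=; rewrite ltnS.
  apply/forallP => v; apply/eqP.
  rewrite -(layered_levels (widen_ord (leqnSn k) v) f_lay); apply: eq_card => p.
  rewrite !inE ffunE /=; case: ifP => pB //.
  by move: pB; rewrite inE => /eqP ->; rewrite eqSS (gtn_eqF (ltn_ord v)).
apply/ffunP => p; rewrite !ffunE; case: ifP => pB; last by rewrite pB.
by apply: val_inj; rewrite /= inordK //; move: pB; rewrite inE => /eqP.
Qed.

Lemma top_level_layered f : f \in layered m k.+1 A lam D ->
  (level f k.+1 \subset A k :&: D) && (#|level f k.+1| == lam k).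
Proof.
move=> f_lay; rewrite (layered_levels ord_max f_lay) eqxx andbT.
apply/subsetP => p; rewrite !inE => /eqP fp.
by have := layered_support f_lay (p:=p); rewrite fp => /(_ isT) /and3P [-> _ ->].
Qed.

Lemma card_layered_step : #|layered m k.+1 A lam D| =
  \sum_(B : {set T} | (B \subset A k :&: D) && (#|B| == lam k))
     #|layered m k A lam (D :\: B)|.
Proof.
rewrite -sum1_card (partition_big (fun f => level f k.+1)
  (fun B => (B \subset A k :&: D) && (#|B| == lam k))); last exact: top_level_layered.
apply: eq_bigr => B /andP [sBAD /eqP cardB].
rewrite -(card_in_imset (raise_inj (B:=B))) -sum1_card; apply: eq_bigl => f.
apply/andP/imsetP => [[f_lay /eqP <-] | [f' f'_lay ->]].
  by have [f' ? ->] := layered_raise_eq f_lay; exists f'; rewrite ?level_raise.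
by rewrite raise_layered // level_raise.
Qed.

End Step.

(* Removing the top level B from D removes exactly |B| points from every A j,
   j <= k, because B lies in A k, the smallest of them. *)
Lemma card_layer_removed j k D (B : {set T}) : j <= k -> B \subset A k :&: D ->
  #|A j :&: (D :\: B)| = #|A j :&: D| - #|B|.
Proof.
move=> le_jk sBAD; rewrite setIDA cardsD (setIidPr (_ : B \subset A j :&: D)) //.
by apply: subset_trans sBAD _; apply/setSI/A_antitone.
Qed.

Lemma card_layered k D : k <= m -> #|layered m k A lam D| =
  \prod_(j < k) 'C(#|A j :&: D| - \sum_(i < k | j < i) lam i, lam j).
Proof.
elim: k D => [|k IH] D le_km; first by rewrite layered0 cards1 big_ord0.
rewrite card_layered_step //.
under eq_bigr => B /andP [sBAD /eqP cardB].
  rewrite IH ?(ltnW le_km) //.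
  under eq_bigr => j _ do rewrite (card_layer_removed (ltnW (ltn_ord j)) sBAD) cardB.
  over.
rewrite sum_nat_const.
have -> : #|[pred B : {set T} | (B \subset A k :&: D) && (#|B| == lam k)]| =
          'C(#|A k :&: D|, lam k).
  by rewrite -cards_draws; apply: eq_card => B; rewrite inE.
rewrite big_ord_recr /= mulnC; congr (_ * _).
  apply: eq_bigr => j _; congr 'C(_, _); rewrite -subnDA addnC.
  rewrite (big_mkcond (fun i : 'I_k.+1 => _ < i)) big_ord_recr /=.
  by rewrite -big_mkcond ltn_ord.
by rewrite big_pred0 ?subn0 // => i; rewrite ltnNge -ltnS ltn_ord.
Qed.

End Layers.

Section Profiles.
Variables (n m : nat) (k : 'I_n -> nat).

Definition profile (r : {ffun 'I_n -> 'I_m.+1}) : {ffun 'I_m -> 'I_m.+1} :=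
  [ffun j : 'I_m => inord #|level r j.+1|].

Definition weight (l : {ffun 'I_m -> 'I_m.+1}) : nat := \sum_(i < m) i.+1 * l i.

Definition layer (j : nat) : {set 'I_n} := [set p | j < k p].

Definition extend (l : {ffun 'I_m -> 'I_m.+1}) (j : nat) : nat :=
  if insub j is Some i then val (l i) else 0.

Lemma extendE l (i : 'I_m) : extend l i = l i.
Proof. by rewrite /extend valK. Qed.

Lemma layer_nested j : layer j.+1 \subset layer j.
Proof. by apply/subsetP => p; rewrite !inE; apply: ltnW. Qed.

(* In a submultiset of cardinality m each level has at most m elements, so the
   profile records the level sizes faithfully; its weight is the cardinality. *)
Lemma profileE r (j : 'I_m) : r \in Cm k m -> profile r j = #|level r j.+1| :> nat.
Proof.
rewrite inE ffunE => /andP [_ /eqP sum_r]; rewrite inordK // ltnS.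
apply: (@leq_trans (\sum_(i < n) r i)); last by rewrite sum_r.
by rewrite sum_by_levels (bigD1 j) //= (leq_trans _ (leq_addr _ _)) // leq_pmull.
Qed.

Lemma weight_profile r : r \in Cm k m -> weight (profile r) = m.
Proof.
move=> r_Cm; move: (r_Cm); rewrite inE => /andP [_ /eqP <-].
by rewrite sum_by_levels; apply: eq_bigr => j _; rewrite profileE.
Qed.

Lemma Cm_profile_fiber (l : {ffun 'I_m -> 'I_m.+1}) : weight l = m ->
  [set r in Cm k m | profile r == l] = layered m m layer (extend l) setT.
Proof.
move=> wl; apply/setP => r; rewrite inE [r \in layered _ _ _ _ _]inE.
apply/andP/andP => [[r_Cm /eqP <-] | ].
  move: (r_Cm); rewrite inE => /andP [/forallP le_rk _]; split.
    apply/forallP => p; apply/implyP => r_pos.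
    by rewrite in_setT -ltnS ltn_ord inE prednK ?le_rk.
  by apply/forallP => v; rewrite extendE profileE.
move=> [/forallP supp /forallP lev].
have levE (j : 'I_m) : #|level r j.+1| = l j by rewrite (eqP (lev j)) extendE.
have r_Cm : r \in Cm k m.
  rewrite inE; apply/andP; split.
    apply/forallP => p; case: (posnP (r p)) => [-> // | r_pos].
    by move/implyP: (supp p) => /(_ r_pos) /and3P [_ _]; rewrite inE prednK.
  by apply/eqP; rewrite sum_by_levels -[RHS]wl; apply: eq_bigr => j _; rewrite levE.
by split=> //; apply/eqP/ffunP => j; apply: val_inj => /=; rewrite profileE ?levE.
Qed.

Lemma card_Cm : #|Cm k m| =
  \sum_(l : {ffun 'I_m -> 'I_m.+1} | weight l == m)
     \prod_(j < m) 'C(#|layer j| - \sum_(i < m | j < i) l i, l j).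
Proof.
rewrite -sum1_card (partition_big profile (fun l => weight l == m)); last first.
  by move=> r /weight_profile ->.
apply: eq_bigr => l /eqP wl.
transitivity #|[set r in Cm k m | profile r == l]|.
  by rewrite -sum1_card; apply: eq_bigl => r; rewrite inE.
rewrite Cm_profile_fiber // card_layered //; last exact: layer_nested.
apply: eq_bigr => j _; rewrite setIT extendE; congr 'C(_ - _, _).
by apply: eq_bigr => i _; rewrite extendE.
Qed.
End Profiles.

Lemma card_ord_ge n a : a <= n -> #|[set p : 'I_n | a <= p]| = n - a.
Proof.
move=> le_an; rewrite -sum1_card big_mkcond /=.
rewrite (eq_bigr (fun p : 'I_n => (a <= p) : nat)); last first.
  by move=> p _; rewrite inE; case: (a <= p).
rewrite -(big_mkord xpredT (fun p => (a <= p) : nat)) (big_cat_nat (leq0n a) le_an) /=.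
rewrite big_nat_cond big1 ?add0n; last first.
  by move=> i /andP [/andP [_ lt_ia] _]; rewrite leqNgt lt_ia.
rewrite big_nat_cond (eq_bigr (fun _ => 1)) -?big_nat_cond.
  by rewrite sum_nat_const_nat muln1.
by move=> i /andP [/andP [-> _] _].
Qed.

Section Ginv.
Variable g : nat -> nat.
Hypothesis g_mono : forall i j, i <= j -> g i <= g j.
Hypothesis g_ge : forall i, i <= g i.

(* The search for g^{-1}(j+1) succeeds within 1..j+1, since g (j+1) >= j+1. *)
Lemma ginv_found j : has (fun i => j.+1 <= g i) (iota 1 j.+1).
Proof. by apply/hasP; exists j.+1; [rewrite mem_iota; lia | apply: g_ge]. Qed.

Lemma ginv_le j : ginv g j.+1 <= j.+1.
Proof. by have := ginv_found j; rewrite has_find size_iota. Qed.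

Lemma ginv_spec j i : (j.+1 <= g i.+1) = (ginv g j.+1 <= i.+1).
Proof.
have found := ginv_found j; have := nth_find 0 found.
rewrite /ginv; set q := find _ _.
have lt_q_j : q < j.+1 by move: found; rewrite has_find size_iota.
rewrite nth_iota // add1n => g_q; apply/idP/idP => [le_j_gi | le_q_i].
  rewrite ltnS leqNgt; apply/negP => lt_iq.
  have := before_find 0 lt_iq.
  by rewrite nth_iota ?add1n ?le_j_gi // (ltn_trans lt_iq).
exact: leq_trans g_q (g_mono le_q_i).
Qed.

Lemma card_layer_ginv n j : j < n ->
  #|layer (fun i : 'I_n => g i.+1) j| = n - ginv g j.+1 + 1.
Proof.
move=> lt_jn; have le_q_j := ginv_le j.
rewrite (_ : layer _ _ = [set p : 'I_n | (ginv g j.+1).-1 <= p]).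
  by rewrite card_ord_ge; rewrite /ginv /= in le_q_j *; lia.
by apply/setP => p; rewrite !inE ginv_spec /ginv.
Qed.

End Ginv.

Lemma weight_tail_bound m (l : {ffun 'I_m -> 'I_m.+1}) (j : 'I_m) :
  0 < l j -> j.+1 + \sum_(i < m | j < i) l i <= weight l.
Proof.
move=> lj_pos; rewrite /weight [X in _ <= X](bigD1 j) //=.
apply: leq_add; first exact: leq_pmulr.
rewrite big_mkcond [X in _ <= X]big_mkcond /=; apply: leq_sum => i _.
case: ltnP => [lt_ji | //]; rewrite neq_ltn lt_ji orbT.
exact: leq_pmull.
Qed.

(* Theorem 4.2: the general count card_Cm, with the layer sizes computed from
   g^{-1}; when l j > 0 the tail sum is at most n - g^{-1}(j+1), so the two
   ways of placing the "+ 1" agree. *)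
Theorem theorem4p2 (g : nat -> nat)
  (g_mono : forall i j, i <= j -> g i <= g j)
  (g_ge : forall i, i <= g i)
  (n : nat) (hn : 1 <= n) (m : nat) (hm1 : 1 <= m) (hmn : m <= n) :
  #|Cm (fun i : 'I_n => g i.+1) m| =
  \sum_(l : {ffun 'I_m -> 'I_m.+1} | \sum_(i < m) i.+1 * l i == m)
     \prod_(j < m) 'C(n - ginv g j.+1 - \sum_(i < m | j < i) l i + 1, l j).
Proof.
rewrite card_Cm; apply: eq_bigr => l /eqP wl; apply: eq_bigr => j _.
rewrite card_layer_ginv //; last exact: leq_trans (ltn_ord j) hmn.
have [-> | lj_pos] := posnP (l j); first by rewrite !bin0.
have := weight_tail_bound lj_pos; rewrite wl; have := ginv_le g_ge j.
by move=> le_q_j tail_le; congr 'C(_, _); lia.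
Qed.
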